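(* Consider an ID-CLF-QP with the cost \begin{align} \mathcal{J}(x,\mathcal{X}) = \mathcal{J}_{z}(x,\mathcal{X}) + \| \mathcal{X} - \mathcal{X}^*_\alpha(t) \|^2, \notag \end{align} where $\mathcal{J}_{z}(x,\mathcal{X})$ is defined in such a way that $\mathcal{J}_{z}(\mathcal{X})|_{\mathcal{Z}} \equiv 0$ (for example $\|J_y(q)\ddot q + \dot J_y(q,\dot q)\dot q\|^2$, since $y(x)\equiv 0$ when $\eta(x)\equiv 0$). Then when the robot is on the zero dynamics (i.e. $\dot{z} = \omega(0,z)$), the optimal control action is $\mathcal{X}^* = \mathcal{X}^*_\alpha(t)$.
   Context: Robot dynamics $D(q)\ddot q + H(q,\dot q)=Bu+J_c^T\lambda$, $J_c\ddot q+\dot J_c\dot q=0$, outputs $y=y^a(x)-y^d(\tau,\alpha)$ with $J_y=\partial y/\partial q$, $\eta=(y,\dot y)$, zero dynamics surface $\mathcal{Z}=\{x: y=0, L_fy=0\}$. The ID-CLF-QP has decision variables $\mathcal{X}=[\ddot q^T,u^T,\lambda^T]^T$, a quadratic cost, and constraints consisting of the CLF inequality $L_FV+L_GV(\dot J_y\dot q+J_y\ddot q)\le-\frac{\gamma}{\epsilon}V$, the equations of motion and the holonomic acceleration constraint. $\mathcal{X}^*_\alpha(t) = (\ddot q^*(t),u^*(t),\lambda^*(t))$ is the nominal trajectory from a feasible solution $\mathbf{w}(\alpha^* )$ of the HZD gait optimization (minimizing a cost subject to closed-loop dynamics under the feedback-linearizing virtual-constraint controller, the HZD impact-invariance condition $\Delta(\mathcal{Z}\cap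 S)\subset\mathcal{Z}$, and physical feasibility). Known fact used: the piecewise polynomial solution of such a feasible NLP is hybrid invariant under the virtual-constraint feedback with parameters $\alpha^*$, i.e. it lies in $\mathcal{Z}_{\alpha^*}$. *)

From HB Require Import structures.
From mathcomp Require Import all_boot all_order all_algebra.
From mathcomp Require Import all_classical all_reals all_analysis.
Set Implicit Arguments. Unset Strict Implicit. Unset Printing Implicit Defensive.
Import Order.TTheory GRing.Theory Num.Theory.
Local Open Scope ring_scope.

Section IDCLFQP.
Variables (R : realType) (n m k p : nat).

(* Robot model: D(q) qdd + H(q,qd) = B u + Jc(q)^T lambda,  Jc qdd + dJc qd = 0 *)
Record robot := Robot {
  rD   : 'cV[R]_n -> 'M[R]_n;
  rH   : 'cV[R]_n -> 'cV[R]_n -> 'cV[R]_n;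
  rB   : 'M[R]_(n, m);
  rJc  : 'cV[R]_n -> 'M[R]_(k, n);
  rdJc : 'cV[R]_n -> 'cV[R]_n -> 'M[R]_(k, n) }.

(* Outputs y(q), their Jacobian J_y = dy/dq and its time derivative dJ_y(q,qd) *)
Record outputs := Outputs {
  oy   : 'cV[R]_n -> 'cV[R]_p;
  oJy  : 'cV[R]_n -> 'M[R]_(p, n);
  odJy : 'cV[R]_n -> 'cV[R]_n -> 'M[R]_(p, n) }.

Definition decvar := ('cV[R]_n * 'cV[R]_m * 'cV[R]_k)%type.
Definition X_qdd (X : decvar) := X.1.1.
Definition X_u   (X : decvar) := X.1.2.
Definition X_lam (X : decvar) := X.2.

Definition sqnorm l (v : 'cV[R]_l) : R := \sum_i (v i 0) ^+ 2.
Definition dist2 (X Y : decvar) : R :=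
  sqnorm (X_qdd X - X_qdd Y) + sqnorm (X_u X - X_u Y) + sqnorm (X_lam X - X_lam Y).

Definition outvel (Y : outputs) q qd : 'cV[R]_p := oJy Y q *m qd.
Definition outacc (Y : outputs) q qd (qdd : 'cV[R]_n) : 'cV[R]_p :=
  odJy Y q qd *m qd + oJy Y q *m qdd.

Definition inZ (Y : outputs) q qd : Prop := oy Y q = 0 /\ outvel Y q qd = 0.

Definition eta (Y : outputs) q qd : 'cV[R]_(p + p) := col_mx (oy Y q) (outvel Y q qd).
Definition Fmx : 'M[R]_(p + p) := block_mx 0 1%:M 0 0.
Definition Gmx : 'M[R]_(p + p, p) := col_mx 0 1%:M.
Definition Vclf (P : 'M[R]_(p + p)) (e : 'cV[R]_(p + p)) : R := ((e^T *m P) *m e) 0 0.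
Definition LFV (P : 'M[R]_(p + p)) (e : 'cV[R]_(p + p)) : R :=
  ((e^T *m (Fmx^T *m P + P *m Fmx)) *m e) 0 0.
Definition LGV (P : 'M[R]_(p + p)) (e : 'cV[R]_(p + p)) : 'rV[R]_p :=
  (2%:R *: (e^T *m P)) *m Gmx.

Definition clf_ok (Y : outputs) (P : 'M[R]_(p + p)) (gamma eps : R) q qd (X : decvar) : Prop :=
  LFV P (eta Y q qd) + (LGV P (eta Y q qd) *m outacc Y q qd (X_qdd X)) 0 0
    <= - (gamma / eps) * Vclf P (eta Y q qd).
Definition eom_ok (rb : robot) q qd (X : decvar) : Prop :=
  rD rb q *m X_qdd X + rH rb q qd = rB rb *m X_u X + (rJc rb q)^T *m X_lam X.
Definition hol_ok (rb : robot) q qd (X : decvar) : Prop :=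
  rJc rb q *m X_qdd X + rdJc rb q qd *m qd = 0.
Definition feasible rb Y P gamma eps q qd X : Prop :=
  [/\ clf_ok Y P gamma eps q qd X, eom_ok rb q qd X & hol_ok rb q qd X].

Definition unique_optimum (feas : decvar -> Prop) (J : decvar -> R) (X0 : decvar) : Prop :=
  feas X0 /\ forall X, feas X -> X <> X0 -> J X0 < J X.

End IDCLFQP.

From Pilot Require Import Defs.
From HB Require Import structures.
From mathcomp Require Import all_boot all_order all_algebra.
From mathcomp Require Import all_classical all_reals all_analysis.
Import Order.TTheory GRing.Theory Num.Theory.
Local Open Scope ring_scope.

(* On the zero dynamics surface eta = 0, so the CLF constraint reads 0 <= 0 and
   is met by every X, while the nominal trajectory satisfies the equations of
   motion and the holonomic constraint; hence X*_alpha(t) is feasible.  Its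
   output acceleration is the derivative of J_y qd, which vanishes identically
   along a trajectory inside Z, so J_z(X*_alpha(t)) = 0.  The cost is therefore
   0 at X*_alpha(t) and at least the positive squared distance to X*_alpha(t)
   at any other X. *)

Section SquaredDistance.
Variable R : realType.

Lemma sqnorm_ge0 l (v : 'cV[R]_l) : 0 <= sqnorm v.
Proof. by apply: sumr_ge0 => i _; exact: sqr_ge0. Qed.

Lemma sqnorm_eq0 l (v : 'cV[R]_l) : sqnorm v = 0 -> v = 0.
Proof.
move=> v0; apply/matrixP => i j; rewrite (ord1 j) [RHS]mxE.
have /eqP := psumr_eq0P (fun i _ => sqr_ge0 (v i 0)) v0 (i:=i) isT.
by rewrite sqrf_eq0 => /eqP.
Qed.

Lemma sqnorm0 l : sqnorm (0 : 'cV[R]_l) = 0.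
Proof. by apply: big1 => i _; rewrite mxE expr0n. Qed.

Variables n m k : nat.
Implicit Types X Y : decvar R n m k.

Lemma dist2xx X : dist2 X X = 0.
Proof. by rewrite /dist2 !subrr !sqnorm0 !addr0. Qed.

Lemma dist2_eq0 X Y : dist2 X Y = 0 -> X = Y.
Proof.
move: X Y => [[a u l] [[a' u' l'] /eqP]].
rewrite /dist2 /X_qdd /X_u /X_lam /=.
rewrite !paddr_eq0 ?addr_ge0 ?sqnorm_ge0 // => /andP[/andP[/eqP da /eqP du] /eqP dl].
by move: da du dl => /sqnorm_eq0/subr0_eq -> /sqnorm_eq0/subr0_eq -> /sqnorm_eq0/subr0_eq ->.
Qed.

Lemma dist2_gt0 X Y : X <> Y -> 0 < dist2 X Y.
Proof.
move=> neXY; rewrite lt_def !addr_ge0 ?sqnorm_ge0 // andbT.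
by apply/eqP => /dist2_eq0.
Qed.

Lemma unique_optimum_dist2 (feas : decvar R n m k -> Prop)
    (Jz : decvar R n m k -> R) X0 :
  feas X0 -> (forall X, 0 <= Jz X) -> Jz X0 = 0 ->
  unique_optimum feas (fun X => Jz X + dist2 X X0) X0.
Proof.
move=> feasX0 Jz_ge0 JzX0; split=> // X _ neX /=.
by rewrite JzX0 dist2xx addr0 ltr_wpDl ?dist2_gt0.
Qed.

End SquaredDistance.

Lemma eta_inZ (R : realType) n p (Y : outputs R n p) q qd :
  inZ Y q qd -> Defs.eta Y q qd = 0.
Proof. by case=> y0 v0; rewrite /Defs.eta y0 v0 col_mx0. Qed.

Lemma clf_ok_inZ (R : realType) n m k p (Y : outputs R n p) P gamma eps q qd
    (X : decvar R n m k) :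
  inZ Y q qd -> clf_ok Y P gamma eps q qd X.
Proof.
move=> /eta_inZ eta0; rewrite /clf_ok eta0 /LFV /LGV /Vclf.
by rewrite trmx0 !mul0mx scaler0 !mul0mx !mxE mulr0.
Qed.

Lemma is_derive_cst0 (R : realType) (f : R -> R) (t d : R) :
  (forall s, f s = 0) -> is_derive t 1 f d -> d = 0.
Proof.
move=> f0 df; rewrite -(derive_val (is_derive := df)).
have -> : f = cst 0 by apply/funext => s; rewrite f0.
exact: derive_cst.
Qed.

Theorem proposition2 (R : realType) (n m k p : nat)
  (rb : robot R n m k) (Y : outputs R n p) (P : 'M[R]_(p + p)) (gamma eps : R)
  (* nominal trajectory of the HZD gait: qs, dqs and the nominal QP variable Xs t = X_alpha t *)
  (qs dqs : R -> 'cV[R]_n) (Xs : R -> decvar R n m k)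
  (* cost term J_z(x, X) *)
  (Jz : 'cV[R]_n -> 'cV[R]_n -> decvar R n m k -> R) :
  0 < gamma -> 0 < eps ->
  (* the nominal trajectory is a solution of the constrained dynamics *)
  (forall s : R, is_derive s 1 qs (dqs s)) ->
  (forall s : R, is_derive s 1 dqs (X_qdd (Xs s))) ->
  (forall s, eom_ok rb (qs s) (dqs s) (Xs s)) ->
  (forall s, hol_ok rb (qs s) (dqs s) (Xs s)) ->
  (* ydd = dJ_y qd + J_y qdd is the time derivative of ydot = J_y qd along it *)
  (forall (s : R) (i : 'I_p), is_derive s 1 (fun s' => outvel Y (qs s') (dqs s') i 0)
                          (outacc Y (qs s) (dqs s) (X_qdd (Xs s)) i 0)) ->
  (* known fact: the nominal trajectory lies in the zero dynamics surface *)
  (forall s, inZ Y (qs s) (dqs s)) ->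
  (* J_z is a nonnegative (quadratic) cost vanishing on Z *)
  (forall q qd X, 0 <= Jz q qd X) ->
  (forall q qd X, inZ Y q qd -> outacc Y q qd (X_qdd X) = 0 -> Jz q qd X = 0) ->
  forall t : R,
  (* the robot is on the zero dynamics, at the nominal state at time t *)
  unique_optimum (feasible rb Y P gamma eps (qs t) (dqs t))
    (fun X => Jz (qs t) (dqs t) X + dist2 X (Xs t)) (Xs t).
Proof.
move=> _ _ _ _ eomXs holXs d_outvel onZ Jz_ge0 Jz_onZ t.
have outacc0 : outacc Y (qs t) (dqs t) (X_qdd (Xs t)) = 0.
  apply/matrixP => i j; rewrite (ord1 j) [RHS]mxE.
  apply: is_derive_cst0 (d_outvel t i) => s.
  by case: (onZ s) => _ ->; rewrite mxE.
apply: unique_optimum_dist2 => //; last exact: Jz_onZ.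
by split; [exact: clf_ok_inZ | exact: eomXs | exact: holXs].
Qed.
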